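(* Let $G$ be an abelian group, $n$ an integer, and $X$ a metric compactum. Every carrier of a nonzero element of $\check{H}^n(X;G)$ is a strong $V^n_G$-continuum.
   Context: $\check{H}^k(\,\cdot\,;G)$ is reduced Čech cohomology. A closed nonempty set $A\subset X$ is a (cohomological) carrier of a nonzero $\alpha\in\check{H}^n(X;G)$ if $i_A^*(\alpha)\neq0$ and $i_B^*(\alpha)=0$ for every proper closed $B\subsetneq A$, where $i_A, i_B$ are inclusions into $X$. For an open cover $\omega$, a map $g$ of a compactum $P$ onto $Y$ is an $\omega$-map if some open cover $\tau$ of $Y$ has $\{g^{-1}(V):V\in\tau\}$ refining $\omega$. For disjoint open $U_1,U_2\subset K$, a partition in $K$ between $U_1$ and $U_2$ is a closed $P\subset K$ with $K=F_1\cup F_2$, $F_1,F_2$ closed, $F_1\cap F_2=P$, $F_1\cap U_1=F_2\cap U_2=\emptyset$. A compactum $K$ is a strong $V^n_G$-continuum if for every two disjoint open $U_1,U_2\subset K$ there exist an open cover $\omega$ of $K_0=K\setminus(U_1\cup U_2)$ and $e\in\check{H}^{n-1}(K_0;G)$ such that for every partition $P$ in $K$ between $U_1$ and $U_2$ and every $\omega$-map $g$ of $P$ onto a space $Y$ we have $0\neq i_P^*(e)\in g^*(\check{H}^{n-1}(Y;G))$, where $i_P:P\hookrightarrow K_0$. *)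

From HB Require Import structures.
From mathcomp Require Import all_boot all_order all_algebra.
From mathcomp Require Import all_classical all_reals topology.
Set Implicit Arguments. Unset Strict Implicit. Unset Printing Implicit Defensive.
Import Order.TTheory GRing.Theory Num.Theory.
Local Open Scope classical_set_scope.
Local Open Scope ring_scope.

(* Reduced Cech cohomology of a subset A of a topological space T, with     *)
(* coefficients in an abelian group G, in degree n : int.                  *)
(* It is the direct limit, over open covers of A (indexed families of sets *)
(* relatively open in A), of the cohomology of the AUGMENTED ordered        *)
(* cochain complex of the nerve (the empty simplex is always present, which *)
(* gives reduced cohomology, incl. H~^{-1}(empty) = G).  A class is given by *)
(* a representative (cover, cocycle); a class is zero iff its pullback to   *)
(* some refinement is a coboundary.  Degree n uses simplices with           *)
(* sz n = n + 1 vertices.  For n < -1 the group is trivial.                  *)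

Definition sz (n : int) : nat := absz (n + 1)%R.

Definition rel_open {T : topologicalType} (A U : set T) : Prop :=
  exists O : set T, open O /\ U `&` A = O `&` A.

Definition is_cover {T : topologicalType} (A : set T) {I : Type}
  (U : I -> set T) : Prop :=
  (forall i, rel_open A (U i)) /\ A `<=` \bigcup_i U i.

Definition simplex {T I : Type} (A : set T) (U : I -> set T) (m : nat)
  (s : 'I_m -> I) : Prop :=
  m = 0%N \/ exists x, A x /\ forall k, U (s k) x.

Definition cobound {I : Type} {G : zmodType} (m : nat)
  (b : ('I_m -> I) -> G) : ('I_m.+1 -> I) -> G :=
  fun s => \sum_(i < m.+1)
     (if odd i then - b (fun k => s (lift i k)) else b (fun k => s (lift i k))).

Definition is_cocycle {T I : Type} {G : zmodType} (A : set T)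
  (U : I -> set T) (m : nat) (c : ('I_m -> I) -> G) : Prop :=
  forall s : 'I_m.+1 -> I, @simplex _ _ A U m.+1 s -> cobound c s = 0.

Definition is_coboundary {T I : Type} {G : zmodType} (A : set T)
  (U : I -> set T) (m : nat) : (('I_m -> I) -> G) -> Prop :=
  match m return (('I_m -> I) -> G) -> Prop with
  | 0%N => fun c => forall s, @simplex _ _ A U 0 s -> c s = 0
  | m'.+1 => fun c => exists b : ('I_m' -> I) -> G,
               forall s, @simplex _ _ A U m'.+1 s -> c s = cobound b s
  end.

Definition refinement {T I J : Type} (A : set T) (U : I -> set T)
  (W : J -> set T) (p : J -> I) : Prop :=
  forall j, W j `&` A `<=` U (p j).

Record cech_rep (T : Type) (G : zmodType) (n : int) := CechRep {
  cr_ind : Type;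
  cr_cov : cr_ind -> set T;
  cr_coch : ('I_(sz n) -> cr_ind) -> G }.
Arguments CechRep {T G n cr_ind}.
Arguments cr_ind {T G n}.
Arguments cr_cov {T G n}.
Arguments cr_coch {T G n}.

Definition cech_valid {T : topologicalType} {G : zmodType} {n : int}
  (A : set T) (r : cech_rep T G n) : Prop :=
  (-1 <= n)%R -> is_cover A (cr_cov r) /\ is_cocycle A (cr_cov r) (cr_coch r).

(* the class represented by r in H~^n(A;G) is zero (for B a subset of the
   original domain, cech_zero B r expresses i_B^*[r] = 0) *)
Definition cech_zero {T : topologicalType} {G : zmodType} {n : int}
  (A : set T) (r : cech_rep T G n) : Prop :=
  (n < -1)%R \/
  exists (J : Type) (W : J -> set T) (p : J -> cr_ind r),
    is_cover A W /\ refinement A (cr_cov r) W p /\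
    is_coboundary A W (fun s => cr_coch r (p \o s)).

Definition cech_pull {T Y : Type} {G : zmodType} {n : int} (g : T -> Y)
  (d : cech_rep Y G n) : cech_rep T G n :=
  @CechRep T G n (cr_ind d) (fun j => g @^-1` cr_cov d j) (cr_coch d).

Definition cech_sub {T : Type} {G : zmodType} {n : int}
  (r1 r2 : cech_rep T G n) : cech_rep T G n :=
  @CechRep T G n (cr_ind r1 * cr_ind r2)%type
    (fun ij => cr_cov r1 ij.1 `&` cr_cov r2 ij.2)
    (fun s => cr_coch r1 (fun k => (s k).1) - cr_coch r2 (fun k => (s k).2)).

Definition carrier {T : topologicalType} {G : zmodType} {n : int}
  (alpha : cech_rep T G n) (A : set T) : Prop :=
  closed A /\ A !=set0 /\ ~ cech_zero A alpha /\
  forall B : set T, closed B -> B `<=` A -> B <> A -> cech_zero B alpha.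

Definition open_in {T : topologicalType} (K U : set T) : Prop :=
  U `<=` K /\ exists O : set T, open O /\ U = O `&` K.

Definition closed_in {T : topologicalType} (K F : set T) : Prop :=
  F `<=` K /\ exists C : set T, closed C /\ F = C `&` K.

Definition is_partition {T : topologicalType} (K U1 U2 P : set T) : Prop :=
  exists F1 F2 : set T, closed_in K F1 /\ closed_in K F2 /\
    K = F1 `|` F2 /\ F1 `&` F2 = P /\ F1 `&` U1 = set0 /\ F2 `&` U2 = set0.

Definition omega_map {T Y : topologicalType} {Iw : Type} (W : Iw -> set T)
  (P : set T) (g : T -> Y) : Prop :=
  {within P, continuous g} /\ g @` P = [set: Y] /\
  exists (J : Type) (V : J -> set Y),
    (forall j, open (V j)) /\ [set: Y] `<=` \bigcup_j V j /\
    forall j, exists i, g @^-1` V j `&` P `<=` W i.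

Definition strong_V {T : topologicalType} (G : zmodType) (n : int)
  (K : set T) : Prop :=
  forall U1 U2 : set T, open_in K U1 -> open_in K U2 ->
    U1 !=set0 -> U2 !=set0 -> U1 `&` U2 = set0 ->
    exists (Iw : Type) (W : Iw -> set T) (e : cech_rep T G (n - 1)),
      is_cover (K `\` (U1 `|` U2)) W /\
      cech_valid (K `\` (U1 `|` U2)) e /\
      forall P : set T, is_partition K U1 U2 P ->
      forall (Y : topologicalType) (g : T -> Y), omega_map W P g ->
        ~ cech_zero P e /\
        exists d : cech_rep Y G (n - 1),
          cech_valid [set: Y] d /\ cech_zero P (cech_sub e (cech_pull g d)).

(* Put F1 = A \ U1 and F2 = A \ U2.  By minimality of the carrier A,
   the class vanishes on F1 and on F2; comparing the two primitives on
   F1 & F2 = A \ (U1 | U2), corrected by the prism (chain homotopy) between the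
   two refinement maps, gives the Mayer-Vietoris connecting cocycle e of degree
   n - 1.  If e died on a partition P = F1' & F2' between U1 and U2, a primitive
   of e would let the primitives on F1' and F2' be glued, along a metric collar
   of P, into one on A = F1' | F2', contradicting that A carries the class.
   An omega-map g factors e: sending each set of the cover of Y to a set of
   omega containing its preimage pulls e back to a cocycle d on Y with g^*d = e
   on P. *)

From HB Require Import structures.
From mathcomp Require Import all_boot all_order all_algebra.
From mathcomp Require Import all_classical all_reals topology.
From mathcomp Require Import zify lra.
Set Implicit Arguments. Unset Strict Implicit. Unset Printing Implicit Defensive.
Import Order.TTheory GRing.Theory Num.Theory.
Local Open Scope classical_set_scope.
Local Open Scope ring_scope.

Section AlternatingSign.
Variable G : zmodType.

Definition alt (i : nat) (x : G) : G := if odd i then - x else x.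

Lemma altD i x y : alt i (x + y) = alt i x + alt i y.
Proof. by rewrite /alt; case: ifP => // _; rewrite opprD. Qed.

Lemma altB i x y : alt i (x - y) = alt i x - alt i y.
Proof. by rewrite altD /alt; case: ifP. Qed.

Lemma alt0 i : alt i 0 = 0.
Proof. by rewrite /alt; case: ifP => //; rewrite oppr0. Qed.

Lemma altS i x : alt i.+1 x = - alt i x.
Proof. by rewrite /alt /=; case: (odd i) => //=; rewrite opprK. Qed.

Lemma alt_alt i j x : alt i (alt j x) = alt (i + j) x.
Proof. by rewrite /alt oddD; case: (odd i); case: (odd j) => //=; rewrite opprK. Qed.

Lemma alt_sum I r (P : pred I) (F : I -> G) i :
  alt i (\sum_(k <- r | P k) F k) = \sum_(k <- r | P k) alt i (F k).
Proof. by elim/big_rec2: _ => [|k y1 y2 _ <-]; rewrite ?alt0 ?altD. Qed.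

End AlternatingSign.

Section Coboundary.
Variables (I : Type) (G : zmodType).

Lemma coboundE m (b : ('I_m -> I) -> G) s :
  cobound b s = \sum_(i < m.+1) alt i (b (fun k => s (lift i k))).
Proof. by []. Qed.

Lemma coboundD m (f g : ('I_m -> I) -> G) s :
  cobound (fun t => f t + g t) s = cobound f s + cobound g s.
Proof. by rewrite !coboundE -big_split; apply: eq_bigr => i _; rewrite altD. Qed.

Lemma coboundB m (f g : ('I_m -> I) -> G) s :
  cobound (fun t => f t - g t) s = cobound f s - cobound g s.
Proof. by rewrite !coboundE -sumrB; apply: eq_bigr => i _; rewrite altB. Qed.

Lemma cobound0 m (s : 'I_m.+1 -> I) : cobound (fun _ : 'I_m -> I => (0 : G)) s = 0.
Proof. by rewrite coboundE big1 // => i _; rewrite alt0. Qed.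

(* Simplices are transported to sequences [nat -> I] (padded with [i0]),
   on which face maps are [bump] and commute by plain arithmetic. *)
Definition to_nat (i0 : I) m (t : 'I_m -> I) : nat -> I :=
  fun p => if insub p is Some o then t o else i0.

Definition nat_cochain m (c : ('I_m -> I) -> G) (u : nat -> I) : G :=
  c (fun k => u k).

Definition face (k : nat) (u : nat -> I) : nat -> I := fun p => u (bump k p).

Definition cobound_nat (m : nat) (phi : (nat -> I) -> G) (u : nat -> I) : G :=
  \sum_(i < m.+1) alt i (phi (face i u)).

Lemma to_natE i0 m (t : 'I_m -> I) (j : 'I_m) : to_nat i0 t j = t j.
Proof.
rewrite /to_nat; case: insubP => [o _ ho|]; last by rewrite ltn_ord.
by congr t; apply: val_inj.
Qed.

Lemma nat_cochain_to_nat i0 m (c : ('I_m -> I) -> G) t :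
  nat_cochain c (to_nat i0 t) = c t.
Proof. by rewrite /nat_cochain; congr c; apply: funext => k; rewrite to_natE. Qed.

Lemma to_nat_face i0 m (S : 'I_m.+1 -> I) (k : 'I_m.+1) :
  to_nat i0 (fun j => S (lift k j)) = face k (to_nat i0 S).
Proof.
apply: funext => p; rewrite /to_nat /face.
case: insubP => [o _ ho|hp].
  case: insubP => [o' _ ho'|]; last by rewrite -ho -[bump k o]/(val (lift k o)) ltn_ord.
  by congr S; apply: val_inj; rewrite /= ho' ho.
case: insubP => [o' _ ho'|//].
have := ltn_ord o'; rewrite ho' /bump; move: hp (ltn_ord k); rewrite -ltnNge; lia.
Qed.

Lemma sum_skew_pairs (a : nat -> nat -> G) N :
  (forall i j, (i <= j)%N -> a i j = - a j.+1 i) ->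
  \sum_(i < N.+1) \sum_(j < N) a i j = 0.
Proof.
move=> skew; elim: N => [|N IH]; first by rewrite big1 // => i _; rewrite big_ord0.
rewrite big_ord_recr /=.
have -> : \sum_(i < N.+1) \sum_(j < N.+1) a i j =
          \sum_(i < N.+1) \sum_(j < N) a i j + \sum_(i < N.+1) a i N.
  by rewrite -big_split /=; apply: eq_bigr => i _; rewrite big_ord_recr.
rewrite IH add0r -big_split big1 // => i _ /=.
by rewrite skew ?addNr // -ltnS ltn_ord.
Qed.

Lemma bump_bump i j p : (i <= j)%N -> bump i (bump j p) = bump j.+1 (bump i p).
Proof. by rewrite /bump => ij; case: (leqP j p); case: (leqP i p); lia. Qed.

Lemma cobound_natK m (phi : (nat -> I) -> G) u :
  cobound_nat m.+1 (cobound_nat m phi) u = 0.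
Proof.
pose a i j := alt (i + j) (phi (fun p => u (bump i (bump j p)))).
transitivity (\sum_(i < m.+2) \sum_(j < m.+1) a i j).
  by apply: eq_bigr => i _; rewrite alt_sum; apply: eq_bigr => j _; rewrite alt_alt.
apply: (@sum_skew_pairs a m.+1) => i j ij.
rewrite /a addSn altS opprK addnC; congr (alt _ (phi _)).
by apply: funext => p; rewrite bump_bump.
Qed.

Lemma coboundK m (b : ('I_m -> I) -> G) (s : 'I_m.+2 -> I) :
  cobound (cobound b) s = 0.
Proof.
rewrite -(nat_cochain_to_nat (s ord0) (cobound (cobound b)) s).
exact: (cobound_natK m (nat_cochain b) (to_nat (s ord0) s)).
Qed.

End Coboundary.

Section PrismNat.
Variables (I : Type) (G : zmodType).
Implicit Types (uf ug : nat -> I) (phi : (nat -> I) -> G).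

(* The prism over an m-simplex with bottom [uf] and top [ug] is triangulated
   by the (m+1)-simplices [prism_simplex i] = (uf 0, ..., uf i, ug i, ..., ug m). *)
Definition prism_simplex (i : nat) uf ug : nat -> I :=
  fun p => if (p <= i)%N then uf p else ug p.-1.

Definition splice (i : nat) uf ug : nat -> I :=
  fun p => if (p < i)%N then uf p else ug p.

Definition prism_nat (m : nat) phi uf ug : G :=
  \sum_(i < m) alt i (phi (prism_simplex i uf ug)).

Definition prism_term phi uf ug (i k : nat) : G :=
  alt (i + k) (phi (prism_simplex i (face k uf) (face k ug))).

Lemma cobound_natE m phi u :
  cobound_nat m phi u = \sum_(0 <= k < m.+1) alt k (phi (face k u)).
Proof. by rewrite big_mkord. Qed.

Ltac bump_cases :=
  rewrite /face /prism_simplex /splice /bump;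
  repeat match goal with |- context[(?a <= ?b)%N] =>
    let E := fresh "E" in case E : (a <= b)%N end;
  rewrite ?add1n ?add0n /=;
  first [ by [] | lia | (congr (_ _); lia) ].

Lemma face_prism_simplex_lt i k uf ug : (k < i)%N ->
  face k (prism_simplex i uf ug) = prism_simplex i.-1 (face k uf) (face k ug).
Proof. by move=> ki; apply: funext => p; bump_cases. Qed.

Lemma face_prism_simplex_eq i uf ug : face i (prism_simplex i uf ug) = splice i uf ug.
Proof. by apply: funext => p; bump_cases. Qed.

Lemma face_prism_simplex_succ i uf ug :
  face i.+1 (prism_simplex i uf ug) = splice i.+1 uf ug.
Proof. by apply: funext => p; bump_cases. Qed.

Lemma face_prism_simplex_gt i k uf ug : (i.+1 < k)%N ->
  face k (prism_simplex i uf ug) = prism_simplex i (face k.-1 uf) (face k.-1 ug).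
Proof. by move=> ik; apply: funext => p; bump_cases. Qed.

Lemma alt_cobound_prism_simplex m phi uf ug i : (i < m.+1)%N ->
  alt i (cobound_nat m.+1 phi (prism_simplex i uf ug)) =
  (phi (splice i uf ug) - phi (splice i.+1 uf ug)) -
  (\sum_(0 <= k < i) prism_term phi uf ug i.-1 k +
   \sum_(i.+1 <= k < m.+1) prism_term phi uf ug i k).
Proof.
move=> im; rewrite cobound_natE (big_cat_nat _ (n:=i)) //; last by lia.
rewrite (@big_ltn _ _ _ i); last by lia.
rewrite (@big_ltn _ _ _ i.+1); last by lia.
rewrite big_add1 /= face_prism_simplex_eq face_prism_simplex_succ !altD !alt_alt.
have -> : alt (i + i) (phi (splice i uf ug)) = phi (splice i uf ug).
  by rewrite /alt oddD addbb.
have -> : alt (i + i.+1) (phi (splice i.+1 uf ug)) = - phi (splice i.+1 uf ug).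
  by rewrite addnS altS /alt oddD addbb.
have -> : alt i (\sum_(0 <= k < i) alt k (phi (face k (prism_simplex i uf ug)))) =
          - \sum_(0 <= k < i) prism_term phi uf ug i.-1 k.
  rewrite alt_sum -sumrN; apply: eq_big_nat => k /andP[_ ki].
  rewrite face_prism_simplex_lt // alt_alt /prism_term.
  have -> : (i + k = (i.-1 + k).+1)%N by lia.
  by rewrite altS.
have -> : alt i (\sum_(i.+1 <= k < m.+1) alt k.+1 (phi (face k.+1 (prism_simplex i uf ug)))) =
          - \sum_(i.+1 <= k < m.+1) prism_term phi uf ug i k.
  rewrite alt_sum -sumrN; apply: eq_big_nat => k /andP[ik _].
  by rewrite face_prism_simplex_gt // alt_alt /prism_term addnS altS.
move: (phi (splice i uf ug)) (phi (splice i.+1 uf ug))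
  (\sum_(0 <= k < i) _) (\sum_(i.+1 <= k < m.+1) _) => a b x y.
by rewrite addrCA -!addrA opprD; congr (_ + _); rewrite addrCA.
Qed.

(* Summing the previous identity over i: the interior faces of the
   triangulated prism cancel and the two splices telescope. *)
Lemma cobound_prism_nat m phi uf ug :
  (forall i, (i < m.+1)%N -> cobound_nat m.+1 phi (prism_simplex i uf ug) = 0) ->
  \sum_(k < m.+1) alt k (prism_nat m phi (face k uf) (face k ug)) =
  phi (splice 0 uf ug) - phi (splice m.+1 uf ug).
Proof.
move=> cocycle.
have rows : \sum_(0 <= i < m.+1) alt i (cobound_nat m.+1 phi (prism_simplex i uf ug)) = 0.
  by rewrite big1_seq // => i; rewrite mem_iota => /andP[_ h]; rewrite cocycle ?alt0.
rewrite (eq_big_nat _ _ (fun i h => alt_cobound_prism_simplex phi uf ug (proj2 (andP h))))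
  sumrB in rows.
have telescope : \sum_(0 <= i < m.+1) (phi (splice i uf ug) - phi (splice i.+1 uf ug)) =
                 phi (splice 0 uf ug) - phi (splice m.+1 uf ug).
  have /(congr1 -%R) := telescope_sumr (fun i => phi (splice i uf ug)) (leq0n m.+1).
  by rewrite opprB => <-; rewrite -sumrN; apply: eq_bigr => i _; rewrite opprB.
rewrite telescope in rows.
have -> : \sum_(k < m.+1) alt k (prism_nat m phi (face k uf) (face k ug)) =
  \sum_(0 <= i < m.+1) (\sum_(0 <= k < i) prism_term phi uf ug i.-1 k +
                        \sum_(i.+1 <= k < m.+1) prism_term phi uf ug i k).
  rewrite big_split /= big_nat_recl // big_geq // add0r.
  rewrite big_nat_recr //= [X in _ + (_ + X)]big_geq // addr0 -big_split /=.
  rewrite (eq_big_nat _ _ (F2 := fun i => \sum_(0 <= k < m.+1) prism_term phi uf ug i k));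
    last by move=> i /andP[_ im]; rewrite -big_cat_nat //; lia.
  rewrite exchange_big /= big_mkord; apply: eq_bigr => k _.
  rewrite /prism_nat alt_sum big_mkord; apply: eq_bigr => i _.
  by rewrite alt_alt /prism_term addnC.
by move/eqP: rows; rewrite subr_eq0 => /eqP ->.
Qed.

End PrismNat.

Section Prism.
Variables (I K : Type) (G : zmodType) (i0 : I).

Definition prism m (f g : K -> I) (c : ('I_m.+1 -> I) -> G) (t : 'I_m -> K) : G :=
  prism_nat m (nat_cochain c) (to_nat i0 (f \o t)) (to_nat i0 (g \o t)).

Definition ord_prism_simplex m (f g : K -> I) (S : 'I_m.+1 -> K) (i : nat) :
  'I_m.+2 -> I :=
  fun k => prism_simplex i (to_nat i0 (f \o S)) (to_nat i0 (g \o S)) k.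

Lemma ord_prism_simplexP m f g (S : 'I_m.+1 -> K) i (k : 'I_m.+2) : (i < m.+1)%N ->
  exists j : 'I_m.+1,
    ord_prism_simplex f g S i k = f (S j) \/ ord_prism_simplex f g S i k = g (S j).
Proof.
move=> im; rewrite /ord_prism_simplex /prism_simplex; case: ifP => ki.
  have kl : (k < m.+1)%N by lia.
  by exists (Ordinal kl); left; rewrite (to_natE i0 (f \o S) (Ordinal kl)).
have kl : (k.-1 < m.+1)%N by have := ltn_ord k; lia.
by exists (Ordinal kl); right; rewrite (to_natE i0 (g \o S) (Ordinal kl)).
Qed.

Lemma cobound_prism m (f g : K -> I) c (S : 'I_m.+1 -> K) :
  (forall i, (i < m.+1)%N -> cobound c (ord_prism_simplex f g S i) = 0) ->
  cobound (prism f g c) S = c (g \o S) - c (f \o S).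
Proof.
move=> cocycle; rewrite coboundE.
have -> : \sum_(i < m.+1) alt i (prism f g c (fun k => S (lift i k))) =
  \sum_(i < m.+1) alt i (prism_nat m (nat_cochain c)
    (face i (to_nat i0 (f \o S))) (face i (to_nat i0 (g \o S)))).
  by apply: eq_bigr => i _; rewrite -!to_nat_face.
rewrite cobound_prism_nat; last by move=> i hi; exact: (cocycle i hi).
rewrite /nat_cochain /splice; congr (c _ - c _); apply: funext => k /=.
  by rewrite to_natE.
by rewrite ltn_ord to_natE.
Qed.

End Prism.

Lemma prism_ext (I K K' : Type) (G : zmodType) (i0 : I) m (f g : K -> I)
  (f' g' : K' -> I) (c : ('I_m.+1 -> I) -> G) (t : 'I_m -> K) (t' : 'I_m -> K') :
  (forall k, f (t k) = f' (t' k)) -> (forall k, g (t k) = g' (t' k)) ->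
  prism i0 f g c t = prism i0 f' g' c t'.
Proof.
by move=> eqf eqg; rewrite /prism; congr prism_nat; apply: funext => p;
  rewrite /to_nat; case: insub => [o|] /=.
Qed.

Definition trivial_on (X : topologicalType) (G : zmodType) (I : Type)
    (U : I -> set X) (m : nat) (a : ('I_m -> I) -> G) (B : set X) : Prop :=
  exists (J : Type) (W : J -> set X) (p : J -> I),
    is_cover B W /\ refinement B U W p /\ is_coboundary B W (fun s => a (p \o s)).

Lemma is_coboundary_eq0 (T J : Type) (G : zmodType) (B : set T) (W : J -> set T) m
  (c : ('I_m -> J) -> G) : (forall s, c s = 0) -> is_coboundary B W c.
Proof.
case: m c => [|m] c /= c0; first by move=> s _; exact: c0.
by exists (fun _ => 0) => s _; rewrite c0 cobound0.
Qed.

Lemma coboundary_extension (T J : Type) (G : zmodType) (B : set T) (W : J -> set T) m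
  (c : ('I_m -> J) -> G) : is_coboundary B W c ->
  exists c' : ('I_m -> J) -> G, [/\ forall s, simplex B W s -> c s = c' s,
    forall S : 'I_m.+1 -> J, cobound c' S = 0 & m = 0%N -> forall s, c' s = 0].
Proof.
case: m c => [|m] c /= => [c0|[b cb]].
  by exists (fun _ => 0); split=> [s /c0 ->|S|//]; rewrite ?cobound0.
by exists (cobound b); split=> [s /cb|S|//]; rewrite ?coboundK.
Qed.

Lemma rel_open_choice (X : topologicalType) (J : Type) (F : set X) (W : J -> set X) :
  (forall j, rel_open F (W j)) ->
  exists O : J -> set X, (forall j, open (O j)) /\ (forall j x, F x -> W j x <-> O j x).
Proof.
move=> /choice [O HO]; exists O; split => [j|j x Fx]; first by case: (HO j).
have [_ E] := HO j; split => h.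
  by have : (W j `&` F) x by []; rewrite E => -[].
by have : (O j `&` F) x by []; rewrite -E => -[].
Qed.

Section Trivializations.
Variables (X : topologicalType) (G : zmodType) (I : Type) (U : I -> set X).
Variables (M : nat) (a : ('I_M.+1 -> I) -> G).

Definition trivializes (F : set X) (J : Type) (O : J -> set X) (p : J -> I)
    (b : ('I_M -> J) -> G) : Prop :=
  [/\ forall j, open (O j), F `<=` \bigcup_j O j, forall j, O j `&` F `<=` U (p j) &
      forall s : 'I_M.+1 -> J, (exists x, F x /\ forall k, O (s k) x) ->
        a (p \o s) = cobound b s].

Lemma trivializes_subset F F' J (O : J -> set X) p b :
  F' `<=` F -> trivializes F O p b -> trivializes F' O p b.
Proof.
move=> F'F [O_open F_cover O_ref b_bound]; split => //.
- by move=> x /F'F /F_cover.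
- by move=> j x [Ox /F'F Fx]; exact: O_ref.
- by move=> s [x [/F'F Fx Ox]]; apply: b_bound; exists x.
Qed.

Lemma trivial_on_trivializes F J (O : J -> set X) p b :
  trivializes F O p b -> trivial_on U a F.
Proof.
move=> [O_open F_cover O_ref b_bound]; exists J, O, p; split; [|split].
- by split=> [j|//]; exists (O j).
- by move=> j x [Ox Fx]; exact: O_ref.
- by exists b => s [//|[x [Fx Ox]]]; apply: b_bound; exists x.
Qed.

Lemma trivializes_of_trivial_on F : trivial_on U a F ->
  exists J (O : J -> set X) p b, trivializes F O p b.
Proof.
move=> [J [W [p [[W_ro W_cover] [W_ref [b W_cob]]]]]].
have [O [O_open WO]] := rel_open_choice W_ro.
exists J, O, p, b; split => //.
- by move=> x Fx; have [j _ Wx] := W_cover x Fx; exists j => //; apply/WO.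
- by move=> j x [Ox Fx]; apply: W_ref; split => //; apply/WO.
- by move=> s [x [Fx Ox]]; apply: W_cob; right; exists x; split => // k; apply/WO.
Qed.

End Trivializations.

Definition collar (X : topologicalType) (P : set X) (Jv : Type) (V N : Jv -> set X)
    (L : Type) (Z : L -> set X) (vm : L -> Jv) : Prop :=
  [/\ forall l, open (Z l), forall l, Z l `<=` N (vm l), P `<=` \bigcup_l Z l &
      forall m (tau : 'I_m -> L) y, (0 < m)%N -> (forall i, Z (tau i) y) ->
        exists z, P z /\ forall i, V (vm (tau i)) z].

Section Gluing.
Variables (X : topologicalType) (G : zmodType) (I : Type) (U : I -> set X).
Hypothesis U_open : forall i, open (U i).
Variables (M : nat) (a : ('I_M.+1 -> I) -> G) (i0 : I).
Hypothesis a_cocycle :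
  forall s : 'I_M.+2 -> I, (exists x, forall k, U (s k) x) -> cobound a s = 0.
Variables (A F1 F2 : set X).
Hypothesis A_split : A = F1 `|` F2.
Hypotheses (F1_closed : closed F1) (F2_closed : closed F2).
Variables (J1 J2 : Type) (O1 : J1 -> set X) (O2 : J2 -> set X).
Variables (p1 : J1 -> I) (p2 : J2 -> I).
Variables (b1 : ('I_M -> J1) -> G) (b2 : ('I_M -> J2) -> G).
Hypotheses (triv1 : trivializes U a F1 O1 p1 b1) (triv2 : trivializes U a F2 O2 p2 b2).

Definition connecting_cochain (s : 'I_M -> J1 * J2) : G :=
  b1 (fst \o s) - b2 (snd \o s) + prism i0 (p1 \o fst) (p2 \o snd) a s.

Lemma connecting_cocycle (s : 'I_M.+1 -> J1 * J2) x : F1 x -> F2 x ->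
  (forall k, O1 (s k).1 x /\ O2 (s k).2 x) -> cobound connecting_cochain s = 0.
Proof.
have [_ _ O1_ref b1_bound] := triv1; have [_ _ O2_ref b2_bound] := triv2.
move=> F1x F2x Ox; rewrite /connecting_cochain coboundD coboundB.
rewrite -[cobound (fun t => b1 _) s]/(cobound b1 (fst \o s)) -b1_bound; last first.
  by exists x; split => // k; case: (Ox k).
rewrite -[cobound (fun t => b2 _) s]/(cobound b2 (snd \o s)) -b2_bound; last first.
  by exists x; split => // k; case: (Ox k).
rewrite cobound_prism; first by rewrite addrA subrK subrr.
move=> i hi; apply: a_cocycle; exists x => k.
have [j [->|->]] := ord_prism_simplexP i0 (p1 \o fst) (p2 \o snd) s k hi.
  by apply: O1_ref; split => //; case: (Ox j).
by apply: O2_ref; split => //; case: (Ox j).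
Qed.

Section Collar.
Variables (L : Type) (Z : L -> set X) (jq : L -> J1 * J2).
Hypothesis Z_open : forall l, open (Z l).
Hypothesis Z_sub : forall l,
  Z l `<=` O1 (jq l).1 `&` O2 (jq l).2 `&` U (p1 (jq l).1) `&` U (p2 (jq l).2).
Hypothesis Z_cover : F1 `&` F2 `<=` \bigcup_l Z l.
Hypothesis Z_near_F1 : forall tau : 'I_M.+1 -> L,
  (exists y, A y /\ forall i, Z (tau i) y) -> exists z, F1 z /\ forall i, O1 (jq (tau i)).1 z.

Inductive glue_index := Side1 of J1 | Side2 of J2 | Collar of L.

Variable C : ('I_M -> glue_index) -> G.
Hypothesis C_cocycle : forall S : 'I_M.+1 -> glue_index, cobound C S = 0.
Hypothesis C_collar : forall tau : 'I_M -> L, (exists y, A y /\ forall i, Z (tau i) y) ->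
  C (Collar \o tau) = connecting_cochain (jq \o tau).

Definition glue_cover (k : glue_index) : set X :=
  match k with
  | Side1 j => O1 j `&` U (p1 j) `&` ~` F2
  | Side2 j => O2 j `&` U (p2 j) `&` ~` F1
  | Collar l => Z l
  end.

Definition glue_vertex (k : glue_index) : I :=
  match k with Side1 j => p1 j | Side2 j => p2 j | Collar l => p1 (jq l).1 end.

Definition is_side1 (k : glue_index) := if k is Side1 _ then true else false.
Definition is_side2 (k : glue_index) := if k is Side2 _ then true else false.

Lemma glue_cover_open k : open (glue_cover k).
Proof.
have [[O1_open _ _ _] [O2_open _ _ _]] := (triv1, triv2).
case: k => [j|j|l] /=; last exact: Z_open.
- by apply: openI; [apply: openI|exact: closed_openC].
- by apply: openI; [apply: openI|exact: closed_openC].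
Qed.

Lemma glue_cover_ref k : glue_cover k `<=` U (glue_vertex k).
Proof. by case: k => [j|j|l] /= x; [case=> [[]]|case=> [[]]|move=> /Z_sub [[[]]]]. Qed.

Lemma glue_cover_cover : A `<=` \bigcup_k glue_cover k.
Proof.
have [[_ O1_cover O1_ref _] [_ O2_cover O2_ref _]] := (triv1, triv2).
move=> y; rewrite A_split => Ay.
have [F2y|nF2y] := pselect (F2 y); have [F1y|nF1y] := pselect (F1 y).
- by have [l _ Zl] := Z_cover (conj F1y F2y); exists (Collar l).
- have [j _ Oj] := O2_cover _ F2y; exists (Side2 j) => //=.
  by split => //; split => //; exact: O2_ref.
- have [j _ Oj] := O1_cover _ F1y; exists (Side1 j) => //=.
  by split => //; split => //; exact: O1_ref.
- by case: Ay.
Qed.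

Lemma no_side1_side2 (S : 'I_M.+1 -> glue_index) y :
  A y -> (forall k, glue_cover (S k) y) -> forall k1 k2, is_side1 (S k1) -> ~~ is_side2 (S k2).
Proof.
move=> Ay Sy k1 k2; move: (Sy k1) (Sy k2).
case: (S k1) => //= ? [_ nF2]; case: (S k2) => //= ? [_ nF1] _.
by move: Ay; rewrite A_split => -[].
Qed.

Lemma collar_simplex m (t : 'I_m -> glue_index) :
  (forall k, ~~ is_side1 (t k)) -> (forall k, ~~ is_side2 (t k)) ->
  exists tau : 'I_m -> L, t = Collar \o tau.
Proof.
move=> n1 n2; have /choice [tau Htau] : forall k, exists l, t k = Collar l.
  by move=> k; move: (n1 k) (n2 k); case: (t k) => // l _ _; exists l.
by exists tau; apply: funext.
Qed.

Variables (d1 : J1) (d2 : J2).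

Definition to_J1 (k : glue_index) : J1 :=
  match k with Side1 j => j | Side2 _ => d1 | Collar l => (jq l).1 end.
Definition to_J2 (k : glue_index) : J2 :=
  match k with Side1 _ => d2 | Side2 j => j | Collar l => (jq l).2 end.

Definition on_side1 (t : 'I_M -> glue_index) : bool := [forall k, ~~ is_side2 (t k)].

(* [C] minus the prism extends [b1 - b2] off the collar, so both branches
   agree on faces lying in the collar. *)
Definition glue_cochain (t : 'I_M -> glue_index) : G :=
  if on_side1 t then b1 (to_J1 \o t)
  else b2 (to_J2 \o t) - prism i0 glue_vertex (p2 \o to_J2) a t + C t.

Lemma glue_cochain_side1 (S : 'I_M.+1 -> glue_index) y :
  A y -> (forall k, glue_cover (S k) y) -> (forall k, ~~ is_side2 (S k)) ->
  a (glue_vertex \o S) = cobound glue_cochain S.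
Proof.
move=> Ay Sy n2.
have -> : cobound glue_cochain S = cobound b1 (to_J1 \o S).
  rewrite !coboundE; apply: eq_bigr => i _; rewrite /glue_cochain.
  have side1 : on_side1 (fun j => S (lift i j)) by apply/forallP => j; exact: n2.
  by rewrite side1.
have -> : glue_vertex \o S = p1 \o (to_J1 \o S).
  by apply: funext => k /=; move: (n2 k); case: (S k).
have [_ _ _ b1_bound] := triv1.
apply: b1_bound.
have [[k1 s1]|no1] := pselect (exists k, is_side1 (S k)).
  exists y; split.
    move: Ay (Sy k1) s1; rewrite A_split => -[] // F2y.
    by case: (S k1) => //= j [_ []].
  move=> k /=; move: (Sy k) (n2 k); case: (S k) => //= [j [[]]//|l].
  by move=> /Z_sub [[[]]].
have [tau ES] : exists tau : 'I_M.+1 -> L, S = Collar \o tau.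
  by apply: collar_simplex => // k; apply/negP => s1; apply: no1; exists k.
rewrite ES in Sy *.
by apply: Z_near_F1; exists y; split => // i; exact: (Sy i).
Qed.

Lemma glue_cochain_side2 (S : 'I_M.+1 -> glue_index) y k2 :
  A y -> (forall k, glue_cover (S k) y) -> is_side2 (S k2) ->
  a (glue_vertex \o S) = cobound glue_cochain S.
Proof.
move=> Ay Sy s2.
have n1 k : ~~ is_side1 (S k).
  by apply/negP => s1; move: (@no_side1_side2 S y Ay Sy k k2 s1); rewrite s2.
have F2y : F2 y.
  by move: Ay (Sy k2) s2; rewrite A_split => -[] // F1y; case: (S k2) => //= j [_ []].
have in_O2 k : O2 (to_J2 (S k)) y.
  by move: (Sy k) (n1 k); case: (S k) => //= [j [[]]//|l] /Z_sub [[[]]].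
have b2_face (i : 'I_M.+1) : glue_cochain (fun j => S (lift i j)) =
    b2 (to_J2 \o (fun j => S (lift i j)))
    - prism i0 glue_vertex (p2 \o to_J2) a (fun j => S (lift i j))
    + C (fun j => S (lift i j)).
  rewrite /glue_cochain; case: ifP => // /forallP side1.
  have [tau Etau] := collar_simplex (fun k => n1 (lift i k)) side1.
  rewrite Etau C_collar; last first.
    by exists y; split => // k; move: (Sy (lift i k)); rewrite (congr1 (fun f => f k) Etau).
  rewrite /connecting_cochain
    (prism_ext i0 _ _ _ (f' := glue_vertex) (g' := p2 \o to_J2) (t' := Collar \o tau)) //.
  by rewrite (addrC (b1 _ - b2 _)) addrA subrK addrC subrK.
have -> : cobound glue_cochain S =
    cobound b2 (to_J2 \o S) - cobound (prism i0 glue_vertex (p2 \o to_J2) a) S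
    + cobound C S.
  by rewrite !coboundE -sumrB -big_split; apply: eq_bigr => i _; rewrite b2_face altD altB.
have [_ _ _ b2_bound] := triv2.
rewrite C_cocycle addr0 -b2_bound; last by exists y.
rewrite cobound_prism; first by rewrite opprB addrC subrK.
move=> i hi; apply: a_cocycle; exists y => k.
have [j [->|->]] := ord_prism_simplexP i0 glue_vertex (p2 \o to_J2) S k hi.
  exact/glue_cover_ref/Sy.
by move: (Sy j) (n1 j); case: (S j) => //= [j' [[]]//|l] /Z_sub [[]].
Qed.

Lemma glue_trivial : trivial_on U a A.
Proof.
exists glue_index, glue_cover, glue_vertex; split; [|split].
- split; last exact: glue_cover_cover.
  by move=> k; exists (glue_cover k); split => //; exact: glue_cover_open.
- by move=> k x [Zx _]; exact: glue_cover_ref.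
exists glue_cochain => S [//|[y [Ay Sy]]] /=.
have [s2|n2] := pselect (exists k, is_side2 (S k)).
  by have [k2 s2k] := s2; exact: glue_cochain_side2 Ay Sy s2k.
by apply: glue_cochain_side1 Ay Sy _ => k; apply/negP => s2k; apply: n2; exists k.
Qed.

End Collar.

Lemma trivial_on_glue (Jv : Type) (V : Jv -> set X) (q : Jv -> J1 * J2)
    (L : Type) (Z : L -> set X) (vm : L -> Jv) :
  (forall j, V j `&` (F1 `&` F2) `<=` O1 (q j).1 `&` O2 (q j).2) ->
  is_coboundary (F1 `&` F2) V (fun s => connecting_cochain (q \o s)) ->
  collar (F1 `&` F2) V
    (fun j => O1 (q j).1 `&` O2 (q j).2 `&` U (p1 (q j).1) `&` U (p2 (q j).2)) Z vm ->
  trivial_on U a A.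
Proof.
move=> V_ref V_cob [Z_open Z_sub Z_cover Z_near].
have [[d1 _]|noJ1] := pselect (exists j : J1, True); last first.
  have AF2 : A `<=` F2.
    move=> x; rewrite A_split => -[F1x|//]; have [_ F1_cover _ _] := triv1.
    by have [j _ _] := F1_cover x F1x; case: noJ1; exists j.
  exact: trivial_on_trivializes (trivializes_subset AF2 triv2).
have [[d2 _]|noJ2] := pselect (exists j : J2, True); last first.
  have AF1 : A `<=` F1.
    move=> x; rewrite A_split => -[//|F2x]; have [_ F2_cover _ _] := triv2.
    by have [j _ _] := F2_cover x F2x; case: noJ2; exists j.
  exact: trivial_on_trivializes (trivializes_subset AF1 triv1).
have [Cv [Cv_ext Cv_cocycle Cv0]] := coboundary_extension V_cob.
have tau_simplex (tau : 'I_M -> L) : (exists y, A y /\ forall i, Z (tau i) y) ->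
    simplex (F1 `&` F2) V (vm \o tau).
  move=> [y [_ Zy]]; have [M0|Mpos] := posnP M; first by left.
  by right; have [z [Pz Vz]] := Z_near _ tau y Mpos Zy; exists z.
suff [C [C_cocycle C_collar]] : exists C : ('I_M -> glue_index L) -> G,
    (forall S, cobound C S = 0) /\ forall tau : 'I_M -> L,
    (exists y, A y /\ forall i, Z (tau i) y) -> C (@Collar L \o tau) = Cv (vm \o tau).
  apply: (@glue_trivial L Z (q \o vm) Z_open Z_sub Z_cover _ C C_cocycle _ d1 d2).
    move=> tau [y [_ Zy]]; have [z [[F1z F2z] Vz]] := Z_near _ tau y isT Zy.
    by exists z; split => // i; have [] := V_ref _ _ (conj (Vz i) (conj F1z F2z)).
  move=> tau tau_y; rewrite C_collar // -Cv_ext //; exact: tau_simplex.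
have [[jv0 _]|noJv] := pselect (exists j : Jv, True).
  pose vm' k := if k is Collar l then vm l else jv0.
  by exists (fun t => Cv (vm' \o t)); split => [S|//]; exact: (Cv_cocycle (vm' \o S)).
exists (fun _ => 0); split => [S|tau _]; first exact: cobound0.
have [M0|Mpos] := posnP M; last by case: noJv; exists (vm (tau (Ordinal Mpos))).
by rewrite Cv0.
Qed.

End Gluing.

(* Every vertex gets a ball of radius [eps/2]; the vertex of a simplex with
   the smallest radius lies in the full [eps]-ball of every other vertex. *)
Lemma metric_collar (R : realType) (X : pseudoMetricType R) (P : set X) (Jv : Type)
    (V N : Jv -> set X) :
  is_cover P V -> (forall j, open (N j)) -> (forall j, V j `&` P `<=` N j) ->
  exists (L : Type) (Z : L -> set X) (vm : L -> Jv), collar P V N Z vm.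
Proof.
move=> [V_ro V_cover] N_open VN.
have /choice [je je_spec] : forall l : {x | P x},
    exists je : Jv * R, 0 < je.2 /\ ball (sval l) je.2 `&` P `<=` V je.1.
  move=> [x Px] /=; have [j _ Vx] := V_cover x Px.
  have [O [O_open VO]] := V_ro j.
  have /nbhs_ballP [e e0 eO] : nbhs x O.
    apply: open_nbhs_nbhs; split => //.
    have : (O `&` P) x by rewrite -VO.
    by case.
  exists (j, e); split => // y [xy Py].
  have : (O `&` P) y by split => //; exact: eO.
  by rewrite -VO => -[].
pose eps l := (je l).2; pose vm l := (je l).1.
exists {x | P x}, (fun l => (ball (sval l) (eps l / 2))° `&` N (vm l)), vm; split.
- by move=> l; apply: openI => //; exact: open_interior.
- by move=> l x [].
- move=> x Px; have [e0 Ve] := je_spec (exist _ x Px).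
  exists (exist _ x Px) => //; split.
    by rewrite /interior; apply: nbhsx_ballx; exact: divr_gt0.
  by apply: VN; split => //; apply: Ve; split => //; exact: ballxx.
- move=> m tau y m_gt0 Zy.
  have [k _ kmin] := @arg_minP _ _ _ (Ordinal m_gt0) xpredT (fun i => eps (tau i)) isT.
  exists (sval (tau k)); split => [|i]; first exact: proj2_sig.
  have [e0 Ve] := je_spec (tau i); apply: Ve; split; last exact: proj2_sig.
  have [[yi _] [yk _]] := (Zy i, Zy k).
  apply: (le_ball (e1 := eps (tau i) / 2 + eps (tau k) / 2)).
    by have := kmin i isT; rewrite /eps; lra.
  apply: (ball_triangle (y := y)); first exact: interior_subset.
  by apply: ball_sym; exact: interior_subset.
Qed.

Lemma preimage_rel_open (X Y : topologicalType) (P : set X) (g : X -> Y) (V : set Y) :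
  {within P, continuous g} -> open V -> rel_open P (g @^-1` V).
Proof.
move=> g_cont V_open.
have /open_subspaceP [O O_open OE] := (continuousP _).1 g_cont V V_open.
by exists O; split => //; rewrite OE.
Qed.

Lemma closed_open_inD (X : topologicalType) (A V : set X) :
  closed A -> open_in A V -> closed (A `\` V).
Proof.
move=> A_closed [_ [Q [Q_open ->]]].
have -> : A `\` (Q `&` A) = A `&` ~` Q.
  apply/seteqP; split => x [Ax h]; split => //; first by move=> Qx; apply: h.
  by move=> [Qx _]; apply: h.
by apply: closedI => //; exact: open_closedC.
Qed.

Lemma partition_closed_split (X : topologicalType) (A U1 U2 P : set X) :
  closed A -> is_partition A U1 U2 P ->
  exists F1 F2 : set X, [/\ closed F1, closed F2, F1 `<=` A `\` U1, F2 `<=` A `\` U2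
    & A = F1 `|` F2 /\ P = F1 `&` F2].
Proof.
move=> A_closed [F1 [F2 [[F1A [C1 [C1_closed F1E]]] [[F2A [C2 [C2_closed F2E]]]]]]].
move=> [A_split [P_split [F1U1 F2U2]]]; exists F1, F2; split.
- by rewrite F1E; exact: closedI.
- by rewrite F2E; exact: closedI.
- move=> x F1x; split; first exact: F1A.
  by move=> U1x; have : (F1 `&` U1) x by []; rewrite F1U1.
- move=> x F2x; split; first exact: F2A.
  by move=> U2x; have : (F2 `&` U2) x by []; rewrite F2U2.
- by [].
Qed.

Lemma szS (n : int) : 0 <= n -> sz n = (sz (n - 1)).+1.
Proof.
case: n => // k _; rewrite /sz subrK.
by have -> : (Posz k + 1)%R = Posz k.+1 by rewrite -addn1.
Qed.

Section CarrierStrongV.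
Variables (R : realType) (X : pseudoMetricType R) (G : zmodType) (n : int).
Variables (I : Type) (U : I -> set X) (a : ('I_(sz (n - 1)).+1 -> I) -> G).
Hypotheses (U_cover : is_cover [set: X] U) (a_cocycle : is_cocycle [set: X] U a).
Hypothesis n_ge0 : 0 <= n.
Variable A : set X.
Hypotheses (A_closed : closed A) (A_nonzero : ~ trivial_on U a A)
  (A_minimal : forall B, closed B -> B `<=` A -> B <> A -> trivial_on U a B).

Lemma cover_open i : open (U i).
Proof. by have [O [O_open]] := U_cover.1 i; rewrite !setIT => ->. Qed.

Lemma cocycle_on_simplices (s : 'I_(sz (n - 1)).+2 -> I) :
  (exists x, forall k, U (s k) x) -> cobound a s = 0.
Proof. by move=> [x Ux]; apply: a_cocycle; right; exists x. Qed.

Section Separation.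
Variables (U1 U2 : set X) (i0 : I) (J1 J2 : Type).
Variables (O1 : J1 -> set X) (O2 : J2 -> set X) (p1 : J1 -> I) (p2 : J2 -> I).
Variables (b1 : ('I_(sz (n - 1)) -> J1) -> G) (b2 : ('I_(sz (n - 1)) -> J2) -> G).
Hypotheses (triv1 : trivializes U a (A `\` U1) O1 p1 b1)
           (triv2 : trivializes U a (A `\` U2) O2 p2 b2).

Definition separating_cover (j : J1 * J2) : set X := O1 j.1 `&` O2 j.2.

Definition separating_class : cech_rep X G (n - 1) :=
  CechRep separating_cover (connecting_cochain a i0 p1 p2 b1 b2).

Lemma separating_cover_cover : is_cover (A `\` (U1 `|` U2)) separating_cover.
Proof.
have [[O1_open O1_cover _ _] [O2_open O2_cover _ _]] := (triv1, triv2).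
split=> [j|x]; first by exists (separating_cover j); split => //; exact: openI.
rewrite setDUr => -[/O1_cover [j1 _ O1x] /O2_cover [j2 _ O2x]].
by exists (j1, j2).
Qed.

Lemma separating_class_valid : cech_valid (A `\` (U1 `|` U2)) separating_class.
Proof.
move=> _; split; first exact: separating_cover_cover.
move=> s [//|[x []]]; rewrite setDUr => -[F1x F2x] Ox.
exact: (connecting_cocycle i0 cocycle_on_simplices triv1 triv2 F1x F2x Ox).
Qed.

(* If the connecting class died on a partition [P = F1 & F2], the class
   would glue from [F1] and [F2] to a trivialization on [A = F1 | F2]. *)
Lemma separating_class_nonzero P :
  is_partition A U1 U2 P -> ~ cech_zero P separating_class.
Proof.
move=> partP [n_lt|[Jv [V [q [V_cover [V_ref V_cob]]]]]]; first by move: n_ge0 n_lt; lia.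
apply: A_nonzero.
have [F1 [F2 [F1_closed F2_closed F1_sub F2_sub [A_split P_split]]]] :=
  partition_closed_split A_closed partP.
rewrite {}P_split in V_cover V_ref V_cob.
have [triv1' triv2'] := (trivializes_subset F1_sub triv1, trivializes_subset F2_sub triv2).
have [[O1_open _ O1_ref _] [O2_open _ O2_ref _]] := (triv1', triv2').
pose N j := O1 (q j).1 `&` O2 (q j).2 `&` U (p1 (q j).1) `&` U (p2 (q j).2).
have N_open j : open (N j).
  by apply: openI; [apply: openI; [exact: openI|]|]; exact: cover_open.
have VN j : V j `&` (F1 `&` F2) `<=` N j.
  move=> x Vx; have [O1x O2x] := V_ref _ _ Vx; have [_ [F1x F2x]] := Vx.
  by split; [split; [split|apply: O1_ref]|apply: O2_ref].
have [L [Z [vm collarZ]]] := metric_collar V_cover N_open VN.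
exact: (trivial_on_glue cover_open cocycle_on_simplices A_split F1_closed F2_closed
  triv1' triv2' V_ref V_cob collarZ).
Qed.

Lemma separating_class_factors P (Y : topologicalType) (g : X -> Y) :
  is_partition A U1 U2 P -> omega_map separating_cover P g ->
  exists d : cech_rep Y G (n - 1),
    cech_valid [set: Y] d /\ cech_zero P (cech_sub separating_class (cech_pull g d)).
Proof.
move=> partP [g_cont [g_onto [Jo [Vo [Vo_open [Vo_cover /choice [f f_ref]]]]]]].
have [F1 [F2 [_ _ F1_sub F2_sub [_ P_split]]]] := partition_closed_split A_closed partP.
exists (CechRep Vo (fun s => connecting_cochain a i0 p1 p2 b1 b2 (f \o s))); split.
  move=> _; split.
    by split=> [j|y _]; [exists (Vo j) | exact: Vo_cover].
  move=> s [//|[y [_ Vy]]].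
  have [x Px gx] : (g @` P) y by rewrite g_onto.
  move: (Px); rewrite P_split => -[/F1_sub F1x /F2_sub F2x].
  have Ox k : O1 (f (s k)).1 x /\ O2 (f (s k)).2 x.
    by apply: (f_ref (s k)); split => //=; rewrite gx; exact: Vy.
  exact: (connecting_cocycle i0 cocycle_on_simplices triv1 triv2 F1x F2x Ox).
right; exists Jo, (fun j => g @^-1` Vo j), (fun j => (f j, j)); split; [|split].
- split=> [j|x Px]; first exact: preimage_rel_open.
  by have [j _ Vx] := Vo_cover (g x) Logic.I; exists j.
- by move=> j x [Vx Px]; split => //; exact: (f_ref j).
- by apply: is_coboundary_eq0 => t; exact: subrr.
Qed.

End Separation.

Lemma carrier_strong_V : strong_V G n A.
Proof.
move=> U1 U2 U1A U2A [u1 U1u1] [u2 U2u2] _.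
have [i0 _ _] := U_cover.2 u1 Logic.I.
have trivial_off V v : open_in A V -> V v ->
    exists J (O : J -> set X) p b, trivializes U a (A `\` V) O p b.
  move=> VA Vv; apply/trivializes_of_trivial_on/A_minimal.
  - exact: closed_open_inD.
  - by move=> x [].
  - move=> AV; have : (A `\` V) v by rewrite AV; exact: VA.1.
    by case.
have [J1 [O1 [p1 [b1 triv1]]]] := trivial_off U1 u1 U1A U1u1.
have [J2 [O2 [p2 [b2 triv2]]]] := trivial_off U2 u2 U2A U2u2.
exists (J1 * J2)%type, (separating_cover O1 O2), (separating_class i0 O1 O2 p1 p2 b1 b2).
split; first exact: (separating_cover_cover triv1 triv2).
split; first exact: (separating_class_valid i0 triv1 triv2).
move=> P partP Y g gP; split; first exact: (separating_class_nonzero triv1 triv2 partP).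
exact: (separating_class_factors i0 triv1 triv2 partP gP).
Qed.

End CarrierStrongV.

Lemma trivial_on_empty_simplices (X : topologicalType) (G : zmodType) (I : Type)
    (U : I -> set X) (a : ('I_0 -> I) -> G) (A : set X) :
  is_cover [set: X] U -> is_cocycle [set: X] U a -> A !=set0 -> trivial_on U a A.
Proof.
move=> [U_ro U_cover] a_cocycle [y Ay]; exists I, U, id; split; [|split].
- split=> [i|x _]; last exact: U_cover.
  by have [O [O_open]] := U_ro i; rewrite !setIT => ->; exists O.
- by move=> i x [].
- move=> s _ /=; have [i _ Ui] := U_cover y Logic.I.
  have := a_cocycle (fun _ => i); rewrite coboundE big_ord1 /alt /= => <-.
    by congr a; apply: funext => -[].
  by right; exists y.
Qed.

Theorem proposition2p5 (G : zmodType) (n : int) (R : realType)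
  (X : pseudoMetricType R) :
  hausdorff_space X -> compact [set: X] ->
  forall alpha : cech_rep X G n,
    cech_valid [set: X] alpha -> ~ cech_zero [set: X] alpha ->
  forall A : set X, carrier alpha A -> strong_V G n A.
Proof.
move=> _ _ [I U a] alpha_valid alpha_nonzero A [A_closed [A0 [A_nonzero A_minimal]]].
have n_ge : -1 <= n by rewrite leNgt; apply/negP => n_lt; apply: alpha_nonzero; left.
have [U_cover a_cocycle] : is_cover [set: X] U /\ is_cocycle [set: X] U a := alpha_valid n_ge.
have {}A_nonzero : ~ trivial_on U a A by move=> h; apply: A_nonzero; right.
have {}A_minimal B : closed B -> B `<=` A -> B <> A -> trivial_on U a B.
  by move=> Bc BA BA'; case: (A_minimal B Bc BA BA') => // n_lt; move: n_ge n_lt; lia.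
clear alpha_valid alpha_nonzero.
have [n_eq|n_ge0] : n = -1 \/ 0 <= n by lia.
  have sz0 : sz n = 0%N by rewrite n_eq /sz addNr.
  move: a a_cocycle A_nonzero A_minimal; rewrite sz0 => a a_cocycle A_nonzero _.
  by case: A_nonzero; exact: trivial_on_empty_simplices.
move: a a_cocycle A_nonzero A_minimal; rewrite (szS n_ge0).
move=> a a_cocycle A_nonzero A_minimal.
exact: (carrier_strong_V U_cover a_cocycle n_ge0 A_closed A_nonzero A_minimal).
Qed.
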